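(* Every barrier $B$ contains an end-closed subbarrier, i.e. there is a barrier $B'\subseteq B$ which is end-closed.
   Context: Finite subsets of $\mathbb{N}$ are identified with their increasing enumerations. A barrier is an infinite set $B$ of finite subsets of $\mathbb{N}$, no member of which is a proper subset of another, such that every infinite $X\subseteq\bigcup B$ has a nonempty initial segment (in its increasing enumeration) belonging to $B$. For a finite sequence $s$, $s_*$ denotes $s$ with its last element removed, and $B_*=\{s_*: s\in B\}$. For $s$ a finite increasing sequence and $a$ greater than all elements of $s$, $s\cdot(a)$ is the sequence obtained by appending $a$. A barrier $B$ is end-closed if $s\cdot(a)\in B$ for every $s\in B_*$ and every $a\in\bigcup B$ greater than all elements of $s$. *)

From mathcomp Require Import all_boot.
Set Implicit Arguments. Unset Strict Implicit. Unset Printing Implicit Defensive.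

(* A finite subset of nat is represented by its increasing enumeration:
   a sequence sorted by the strict order ltn. A family of finite subsets is
   a predicate on seq nat. *)
Definition increasing (s : seq nat) : Prop := sorted ltn s.

Definition infinite_fam (T : eqType) (P : T -> Prop) : Prop :=
  forall l : seq T, exists x, P x /\ x \notin l.

Definition bigU (B : seq nat -> Prop) (x : nat) : Prop :=
  exists2 s, B s & x \in s.

Definition init_seg (X : nat -> Prop) (s : seq nat) : Prop :=
  [/\ s != [::], increasing s, (forall x, x \in s -> X x) &
      forall x, X x -> x <= last 0 s -> x \in s].

Definition barrier (B : seq nat -> Prop) : Prop :=
  [/\ (forall s, B s -> increasing s),
      infinite_fam B,
      (forall s t, B s -> B t -> {subset s <= t} -> s = t) &
      (forall X : nat -> Prop, (forall x, X x -> bigU B x) -> infinite_fam X ->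
         exists s, init_seg X s /\ B s)].

Definition drop_last (s : seq nat) : seq nat := take (size s).-1 s.

Definition Bstar (B : seq nat -> Prop) (t : seq nat) : Prop :=
  exists2 s, B s & t = drop_last s.

Definition end_closed (B : seq nat -> Prop) : Prop :=
  forall s a, Bstar B s -> bigU B a -> (forall x, x \in s -> x < a) ->
    B (rcons s a).

From Pilot Require Import Defs.
From mathcomp Require Import all_boot.
From Stdlib Require Import Classical ClassicalEpsilon.

Set Implicit Arguments. Unset Strict Implicit. Unset Printing Implicit Defensive.

(** Diagonalise: choose m_0 < m_1 < ... in the union of B so that, for every
    sorted s drawn from m_0, ..., m_(k-1), the tail (m_j)_(j >= k) lies either
    entirely inside or entirely outside {a | s·a ∈ B}.  Stage k achieves this by
    one infinite-pigeonhole refinement of the current reservoir per subsequence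
    of the chosen prefix.  The members of B contained in M = {m_i} then still
    form a barrier, and it is end-closed: if s·c belongs to it and a ∈ M lies
    above s, homogeneity of M beyond s transfers s·c ∈ B to s·a ∈ B. *)

Definition unbounded (Y : nat -> Prop) : Prop := forall n, exists2 x, n <= x & Y x.

Lemma unbounded_above (Y : nat -> Prop) c :
  unbounded Y -> unbounded (fun x => Y x /\ c < x).
Proof.
move=> hY n; have [x] := hY (maxn n c.+1); rewrite geq_max => /andP[nx cx] Yx.
by exists x.
Qed.

Lemma unbounded_infinite (Y : nat -> Prop) : unbounded Y -> infinite_fam Y.
Proof.
move=> hY l; have [x lx Yx] := hY (\max_(y <- l) y).+1.
exists x; split=> //; apply: contraTN lx => xl.
by rewrite -ltnNge ltnS (leq_bigmax_seq x xl).
Qed.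

Fixpoint subseqs (T : Type) (s : seq T) : seq (seq T) :=
  if s is x :: s' then subseqs s' ++ map (cons x) (subseqs s') else [:: [::]].

Lemma mem_subseqs (T : eqType) (s t : seq T) : (t \in subseqs s) = subseq t s.
Proof.
elim: s t => [|x s IH] [|y t] //=; rewrite mem_cat IH ?sub0seq //.
case: eqVneq => [-> | neq_yx].
  by rewrite mem_map ?IH; [apply: orb_idl; apply: cons_subseq | move=> ? ? []].
by apply: orb_idr => /mapP[u _ [/eqP]]; rewrite (negbTE neq_yx).
Qed.

Lemma sorted_subset_subseq (T : eqType) (lt : rel T) (s t : seq T) :
  transitive lt -> irreflexive lt -> sorted lt s -> sorted lt t ->
  {subset t <= s} -> subseq t s.
Proof.
move=> lt_trans lt_irr s_sorted t_sorted ts.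
suff -> : t = filter (mem t) s by apply: filter_subseq.
apply: (irr_sorted_eq lt_trans lt_irr) => //; first exact: sorted_filter.
by move=> x; rewrite mem_filter andb_idr //; apply: ts.
Qed.

Definition witness (Z : nat -> Prop) : nat := epsilon (inhabits 0) Z.

Lemma witnessP (Z : nat -> Prop) : unbounded Z -> Z (witness Z).
Proof. by move=> hZ; apply: epsilon_spec; have [x _ Zx] := hZ 0; exists x. Qed.

Section EndHomogeneous.

Variable P : seq nat -> nat -> Prop.

Definition end_homogeneous (M : nat -> Prop) : Prop :=
  forall s a b, sorted ltn s -> {in s, forall x, M x} -> M a -> M b ->
    {in s, forall x, x < a} -> {in s, forall x, x < b} -> P s a -> P s b.

Definition homogenize (s : seq nat) (Y : nat -> Prop) : nat -> Prop :=
  if excluded_middle_informative (unbounded (fun a => Y a /\ P s a))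
  then fun a => Y a /\ P s a else fun a => Y a /\ ~ P s a.

Lemma homogenize_sub s Y a : homogenize s Y a -> Y a.
Proof. by rewrite /homogenize; case: excluded_middle_informative => _ []. Qed.

Lemma homogenize_unbounded s Y : unbounded Y -> unbounded (homogenize s Y).
Proof.
rewrite /homogenize; case: excluded_middle_informative => [hQ _ | hQ hY n /=]; first exact: hQ.
have [n0 hn0] := not_all_ex_not _ _ hQ.
have [x] := hY (maxn n n0); rewrite geq_max => /andP[nx n0x] Yx.
by exists x => //; split=> // Px; apply: hn0; exists x.
Qed.

Lemma homogenize_hom s Y a b :
  homogenize s Y a -> homogenize s Y b -> P s a -> P s b.
Proof.
by rewrite /homogenize; case: excluded_middle_informative => _ [_ ha] [_ hb] // /ha.
Qed.

Definition homogenize_all (L : seq (seq nat)) (Y : nat -> Prop) : nat -> Prop :=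
  foldr homogenize Y L.

Lemma homogenize_all_sub L Y a : homogenize_all L Y a -> Y a.
Proof. by elim: L a => //= s L IH a /homogenize_sub/IH. Qed.

Lemma homogenize_all_unbounded L Y : unbounded Y -> unbounded (homogenize_all L Y).
Proof. by elim: L => //= s L IH /IH; apply: homogenize_unbounded. Qed.

Lemma homogenize_all_hom L Y s a b : s \in L ->
  homogenize_all L Y a -> homogenize_all L Y b -> P s a -> P s b.
Proof.
elim: L => //= s' L IH; rewrite inE => /predU1P[-> | sL]; first exact: homogenize_hom.
by move=> /homogenize_sub ha /homogenize_sub; apply: IH.
Qed.

Variable Y0 : nat -> Prop.

(* [stage k] holds the prefix m_0, ..., m_(k-1) and the reservoir from which
   all later m_j are taken. *)
Fixpoint stage (k : nat) : seq nat * (nat -> Prop) :=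
  if k is k'.+1 then
    let Z := homogenize_all (subseqs (stage k').1) (stage k').2 in
    (rcons (stage k').1 (witness Z), fun x => Z x /\ witness Z < x)
  else ([::], Y0).

Definition chosen k := (stage k).1.
Definition reservoir k := (stage k).2.
Definition refined k := homogenize_all (subseqs (chosen k)) (reservoir k).
Definition diag k := witness (refined k).

Hypothesis Y0_unbounded : unbounded Y0.

Lemma reservoir_unbounded k : unbounded (reservoir k).
Proof.
elim: k => [|k IH]; first exact: Y0_unbounded.
exact: unbounded_above (homogenize_all_unbounded _ IH).
Qed.

Lemma refined_diag k : refined k (diag k).
Proof. exact: witnessP (homogenize_all_unbounded _ (reservoir_unbounded k)). Qed.

Lemma reservoir_antitone i j x : i <= j -> reservoir j x -> reservoir i x.
Proof.
move=> /subnK <-; elim: (j - i) => // d IH [/homogenize_all_sub ? _]; exact: IH.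
Qed.

Lemma diag_ltn : {homo diag : i j / i < j}.
Proof.
apply: homo_ltn ltn_trans _ => k.
by have [] := homogenize_all_sub (refined_diag k.+1).
Qed.

Lemma diag_refined i k : k <= i -> refined k (diag i).
Proof.
rewrite leq_eqVlt => /predU1P[<- | lt_ki]; first exact: refined_diag.
by have [] := reservoir_antitone lt_ki (homogenize_all_sub (refined_diag i)).
Qed.

Lemma chosen_mkseq k : chosen k = mkseq diag k.
Proof. by elim: k => // k IH; rewrite mkseqS -IH. Qed.

Lemma diag_end_homogeneous : end_homogeneous (fun x => exists i, diag i = x).
Proof.
move=> s _ _ s_sorted sM [i <-] [j <-] lt_i lt_j.
(* s precedes both diag i and diag j in M, so it was chosen before stage min i j. *)
set k := minn i j.
have diag_mono := leqW_mono (leq_mono diag_ltn).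
have s_chosen : {subset s <= chosen k}.
  move=> x xs; have [l dl] := sM x xs; subst x.
  by rewrite chosen_mkseq map_f // mem_iota leq_min -(diag_mono l i) -(diag_mono l j) lt_i ?lt_j.
have s_sub : s \in subseqs (chosen k).
  rewrite mem_subseqs; apply: sorted_subset_subseq ltn_trans ltnn _ s_sorted s_chosen.
  by rewrite chosen_mkseq (homo_sorted diag_ltn) // iota_ltn_sorted.
by apply: homogenize_all_hom s_sub _ _; apply: diag_refined; rewrite ?geq_minl ?geq_minr.
Qed.

Lemma diag_sub i : Y0 (diag i).
Proof. exact: reservoir_antitone (leq0n i) (homogenize_all_sub (refined_diag i)). Qed.

Lemma diag_unbounded : unbounded (fun x => exists i, diag i = x).
Proof.
have geq_diag n : n <= diag n.
  by elim: n => // n IH; apply: leq_ltn_trans IH (diag_ltn (ltnSn n)).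
by move=> n; exists (diag n); last exists n.
Qed.

End EndHomogeneous.

Lemma exists_end_homogeneous (P : seq nat -> nat -> Prop) (Y : nat -> Prop) :
  unbounded Y ->
  exists2 M : nat -> Prop, (forall x, M x -> Y x) & unbounded M /\ end_homogeneous P M.
Proof.
move=> Y_unb; exists (fun x => exists i, diag P Y i = x).
  by move=> _ [i <-]; apply: diag_sub.
by split; [apply: diag_unbounded | apply: diag_end_homogeneous].
Qed.

Lemma drop_last_rcons (s : seq nat) c : drop_last (rcons s c) = s.
Proof. by rewrite /drop_last size_rcons -cats1 take_size_cat. Qed.

Section Restriction.

Variable B : seq nat -> Prop.
Hypothesis B_barrier : barrier B.

Lemma barrier_neq_nil s : B s -> s != [::].
Proof.
case: B_barrier => _ B_inf B_anti _ Bs; apply/eqP => s_nil; subst s.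
have [t [Bt]] := B_inf [:: [::]].
suff -> : t = [::] by rewrite mem_head.
by apply/esym/(B_anti _ _ Bs Bt) => x.
Qed.

Lemma barrier_union_unbounded : unbounded (Defs.bigU B).
Proof.
case: B_barrier => B_sorted B_inf _ _ n.
have [s [Bs]] := B_inf (subseqs (iota 0 n)).
rewrite mem_subseqs => s_not_sub.
have /allPn [x xs] : ~~ all (fun x => x < n) s.
  apply: contra s_not_sub => /allP s_lt.
  apply: sorted_subset_subseq ltn_trans ltnn _ (B_sorted _ Bs) _.
  - exact: iota_ltn_sorted.
  - by move=> x /s_lt; rewrite mem_iota.
by rewrite -leqNgt => nx; exists x => //; exists s.
Qed.

Definition restrict (M : nat -> Prop) (u : seq nat) : Prop :=
  B u /\ {in u, forall x, M x}.

Variable M : nat -> Prop.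

Lemma restrict_barrier :
  (forall x, M x -> Defs.bigU B x) -> unbounded M -> barrier (restrict M).
Proof.
case: B_barrier => B_sorted _ B_anti B_bar MU M_unb; split.
- by move=> s [/B_sorted].
- move=> l; set N := \max_(x <- flatten l) x.
  have [s [[s_nil _ sX _] Bs]] := B_bar (fun x => M x /\ N < x)
    (fun x '(conj Mx _) => MU x Mx) (unbounded_infinite (unbounded_above N M_unb)).
  exists s; split; first by split=> // x /sX [].
  case: s s_nil sX {Bs} => // x s _ sX; apply/negP => xs_l.
  have [_] := sX x (mem_head _ _); rewrite ltnNge (leq_bigmax_seq x) //.
  by apply/flattenP; exists (x :: s) => //; apply: mem_head.
- by move=> s t [Bs _] [Bt _]; apply: B_anti.
- move=> X XU X_inf.
  have [|s [X_s Bs]] := B_bar X _ X_inf.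
    by move=> x /XU [u [Bu _] xu]; exists u.
  exists s; split=> //; split=> // x xs; case: X_s => _ _ sX _.
  by have [u [_ uM] xu] := XU x (sX x xs); apply: uM.
Qed.

Lemma restrict_end_closed :
  end_homogeneous (fun s a => B (rcons s a)) M -> end_closed (restrict M).
Proof.
case: B_barrier => B_sorted _ _ _ M_hom _ a [t [Bt tM] ->] [u [_ uM] au] lt_a.
have := barrier_neq_nil Bt; case/lastP: t Bt tM lt_a => // s c Bt tM.
rewrite drop_last_rcons => lt_a _.
have := B_sorted _ Bt; rewrite /increasing sorted_pairwise ?pairwise_rcons; last exact: ltn_trans.
case/andP=> /allP lt_c; rewrite -sorted_pairwise; last exact: ltn_trans.
move=> s_sorted.
have sM : {in s, forall x, M x} by move=> x xs; apply: tM; rewrite mem_rcons inE xs orbT.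
have Mc : M c by apply: tM; rewrite mem_rcons mem_head.
split; first exact: M_hom s_sorted sM Mc (uM a au) lt_c lt_a Bt.
by move=> x; rewrite mem_rcons inE => /predU1P[-> | /sM //]; apply: uM.
Qed.

End Restriction.

Theorem lemma2p10 (B : seq nat -> Prop) :
  barrier B ->
  exists B' : seq nat -> Prop,
    (forall s, B' s -> B s) /\ barrier B' /\ end_closed B'.
Proof.
move=> B_barrier.
have [M MU [M_unb M_hom]] :=
  exists_end_homogeneous (fun s a => B (rcons s a)) (barrier_union_unbounded B_barrier).
exists (restrict B M); split; first by move=> s [].
by split; [exact: restrict_barrier | exact: restrict_end_closed].
Qed.
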